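(* Every maximal chain set $E\subseteq M$ is closed, and hence compact.
   Context: Hybrid system setup: $G$ is a finite directed graph with vertex set $V=\{1,\dots,n\}$ (loops allowed); $\Omega$ is the set of sequences $(x_i)_{i\in\mathbb Z}\in V^{\mathbb Z}$ with an edge from $x_i$ to $x_{i+1}$ for all $i$. Fix $h>0$. $\bar\Delta$ is the set of functions $x:\mathbb R\to V$ constant on each $[kh,(k+1)h)$, $k\in\mathbb Z$, with $(x(kh))_k\in\Omega$; $\Delta=\{x(\cdot+t):x\in\bar\Delta, t\in\mathbb R\}$ with metric $d(x,y)=\sum_{i\in\mathbb Z}4^{-|i|}\frac1h\int_{ih}^{(i+1)h}\delta(x,y,t)\,dt$ ($\delta=1$ if $x(t)\ne y(t)$, else $0$), and $\psi_t(f)=f(\cdot+t)$. $M$ is a compact metric space (e.g. a compact subset of $\mathbb R^d$) and $\phi_1,\dots,\phi_n$ are continuous flows on $M$, $\phi_i$ associated with vertex $i$. For $x\in M$, $f\in\Delta$, $\varphi(\cdot,x,f):\mathbb R\to M$ is the continuous curve with $\varphi(0,x,f)=x$ such that whenever $f\equiv i$ on an interval $I$, $\varphi(t,x,f)=\phi_i(t-s,\varphi(s,x,f))$ for all $s,t$ in the closure of $I$. A set $E\subseteq M$ is a chain set if (i) for every $x\in E$ there is $f\in\Delta$ with $\varphi(t,x,f)\in E$ for all $t\in\mathbb R$, and (ii) for all $x,y\in E$ and all $\varepsilon,T>0$ there are $k\in\mathbb N$, $x_0,\dots,x_k\in M$, $f_0,\dots,f_{k-1}\in\Delta$ and $t_0,\dots,t_{k-1}\ge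 T$ with $x_0=x$, $x_k=y$ and $d(\varphi(t_j,x_j,f_j),x_{j+1})\le\varepsilon$ for $j=0,\dots,k-1$ (an $(\varepsilon,T)$-chain from $x$ to $y$). A maximal chain set is a chain set not properly contained in another chain set. *)

From Stdlib Require Import Reals ZArith.
Open Scope R_scope.

Definition is_metric {M : Type} (dM : M -> M -> R) : Prop :=
  (forall x y, 0 <= dM x y) /\
  (forall x y, dM x y = 0 <-> x = y) /\
  (forall x y, dM x y = dM y x) /\
  (forall x y z, dM x z <= dM x y + dM y z).

Definition m_open {M : Type} (dM : M -> M -> R) (U : M -> Prop) : Prop :=
  forall x, U x -> exists r, 0 < r /\ forall y, dM x y < r -> U y.

Definition m_closed {M : Type} (dM : M -> M -> R) (E : M -> Prop) : Prop :=
  m_open dM (fun x => ~ E x).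

Definition m_compact {M : Type} (dM : M -> M -> R) (K : M -> Prop) : Prop :=
  forall (I : Type) (U : I -> M -> Prop),
    (forall i, m_open dM (U i)) ->
    (forall x, K x -> exists i, U i x) ->
    exists l : list I, forall x, K x -> exists i, List.In i l /\ U i x.

Definition m_compact_space {M : Type} (dM : M -> M -> R) : Prop :=
  m_compact dM (fun _ => True).

Definition is_cont_flow {M : Type} (dM : M -> M -> R) (phi : R -> M -> M) : Prop :=
  (forall x, phi 0 x = x) /\
  (forall s t x, phi (s + t) x = phi s (phi t x)) /\
  (forall t x eps, 0 < eps -> exists del, 0 < del /\
     forall s y, Rabs (s - t) < del -> dM x y < del -> dM (phi t x) (phi s y) < eps).

Definition in_Delta_bar (n : nat) (G : nat -> nat -> Prop) (h : R) (x : R -> nat) : Prop :=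
  (forall (k : Z) (t : R), IZR k * h <= t < (IZR k + 1) * h -> x t = x (IZR k * h)) /\
  (forall k : Z, (1 <= x (IZR k * h)%R)%nat /\ (x (IZR k * h)%R <= n)%nat /\
                 G (x (IZR k * h)) (x ((IZR k + 1) * h))).

Definition in_Delta (n : nat) (G : nat -> nat -> Prop) (h : R) (f : R -> nat) : Prop :=
  exists x t0, in_Delta_bar n G h x /\ forall s, f s = x (s + t0).

Definition is_solution {M : Type} (dM : M -> M -> R) (flow : nat -> R -> M -> M)
    (x : M) (f : R -> nat) (gam : R -> M) : Prop :=
  gam 0 = x /\
  (forall t eps, 0 < eps -> exists del, 0 < del /\
     forall s, Rabs (s - t) < del -> dM (gam t) (gam s) < eps) /\
  (forall (i : nat) (a b : R), a < b -> (forall u, a < u < b -> f u = i) ->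
     forall s t, a <= s <= b -> a <= t <= b -> gam t = flow i (t - s) (gam s)).

Definition eps_T_chain {M : Type} (dM : M -> M -> R) (n : nat) (G : nat -> nat -> Prop)
    (h : R) (flow : nat -> R -> M -> M) (eps T : R) (x y : M) : Prop :=
  exists (k : nat) (xs : nat -> M) (fs : nat -> R -> nat) (ts : nat -> R),
    (1 <= k)%nat /\ xs 0%nat = x /\ xs k = y /\
    forall j, (j < k)%nat ->
      in_Delta n G h (fs j) /\ T <= ts j /\
      exists gam, is_solution dM flow (xs j) (fs j) gam /\
                  dM (gam (ts j)) (xs (S j)) <= eps.

Definition chain_set {M : Type} (dM : M -> M -> R) (n : nat) (G : nat -> nat -> Prop)
    (h : R) (flow : nat -> R -> M -> M) (E : M -> Prop) : Prop :=
  (forall x, E x -> exists f gam, in_Delta n G h f /\ is_solution dM flow x f gam /\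
                                  forall t, E (gam t)) /\
  (forall x y, E x -> E y -> forall eps T, 0 < eps -> 0 < T ->
     eps_T_chain dM n G h flow eps T x y).

Definition maximal_chain_set {M : Type} (dM : M -> M -> R) (n : nat)
    (G : nat -> nat -> Prop) (h : R) (flow : nat -> R -> M -> M) (E : M -> Prop) : Prop :=
  chain_set dM n G h flow E /\
  forall E', chain_set dM n G h flow E' -> (forall x, E x -> E' x) ->
             forall x, E' x -> E x.

(** The closure of a chain set [E] is again a chain set, so a maximal chain set is closed.
    Chains between points of the closure are obtained from chains between nearby points of [E]
    with one extra jump at each end.  The real work is to find, through a point [z] of the
    closure, a trajectory that stays in the closure.  Take points [e m] of [E] converging to
    [z], with trajectories in [E] whose signals are given by a phase [taus m] in [[0, h]] and a
    walk [cs m] in [G].  Since [[0, h]] is compact and the walk takes finitely many values, a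
    diagonal argument yields a phase [tau] and a walk [c] that are approximated, on every finite
    window, by infinitely many [(taus m, cs m)].  Continuity of the flows then shows, cell by
    cell, that the solution from [z] with signal [(tau, c)] is at every time arbitrarily close
    to these trajectories.  Finally, closed subsets of a compact space are compact. *)

From Stdlib Require Import Reals ZArith Lra Lia Classical ClassicalEpsilon Rtopology List.
Open Scope R_scope.

Lemma metric_refl {M} (dM : M -> M -> R) x : is_metric dM -> dM x x = 0.
Proof. intros (_ & H & _). now apply H. Qed.

Definition continuous_at {M} (dM : M -> M -> R) (g : R -> M) (t : R) : Prop :=
  forall eps, 0 < eps -> exists del, 0 < del /\
    forall s, Rabs (s - t) < del -> dM (g t) (g s) < eps.

Lemma continuous_at_glue {M} (dM : M -> M -> R) (g F H : R -> M) t r : 0 < r ->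
  (forall u, t <= u <= t + r -> g u = F u) -> (forall u, t - r <= u <= t -> g u = H u) ->
  F t = g t -> H t = g t -> continuous_at dM F t -> continuous_at dM H t ->
  continuous_at dM g t.
Proof.
  intros Hr HF HH Ft Ht cF cH eps Heps.
  destruct (cF eps Heps) as (d1 & Hd1 & H1), (cH eps Heps) as (d2 & Hd2 & H2).
  exists (Rmin r (Rmin d1 d2)). split; [now repeat apply Rmin_pos|].
  intros s Hs. apply Rabs_def2 in Hs.
  pose proof (Rmin_l r (Rmin d1 d2)). pose proof (Rmin_r r (Rmin d1 d2)).
  pose proof (Rmin_l d1 d2). pose proof (Rmin_r d1 d2).
  destruct (Rle_dec t s).
  - rewrite (HF s), <- Ft by lra. apply H1, Rabs_def1; lra.
  - rewrite (HH s), <- Ht by lra. apply H2, Rabs_def1; lra.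
Qed.

Section Flow.
Variables (M : Type) (dM : M -> M -> R) (phi : R -> M -> M).
Hypothesis phi_flow : is_cont_flow dM phi.

Lemma flow_zero x : phi 0 x = x.
Proof. apply phi_flow. Qed.

Lemma flow_add s t x : phi s (phi t x) = phi (s + t) x.
Proof. symmetry. apply phi_flow. Qed.

Lemma flow_continuous_space t x eps : 0 < eps ->
  exists del, 0 < del /\ forall y, dM x y < del -> dM (phi t x) (phi t y) < eps.
Proof.
  intros Heps. destruct (proj2 (proj2 phi_flow) t x eps Heps) as (del & Hdel & H).
  exists del. split; [exact Hdel|]. intros y Hy. apply H; [|exact Hy].
  rewrite Rminus_diag, Rabs_R0. exact Hdel.
Qed.

Lemma flow_orbit_continuous a x t : is_metric dM ->
  continuous_at dM (fun u => phi (u - a) x) t.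
Proof.
  intros Hm eps Heps. destruct (proj2 (proj2 phi_flow) (t - a) x eps Heps) as (del & Hdel & H).
  exists del. split; [exact Hdel|]. intros s Hs. apply H.
  - now replace (s - a - (t - a)) with (s - t) by ring.
  - now rewrite metric_refl.
Qed.

End Flow.

(** The switching grid of a signal in [Delta]: cell [k] is [[grid h tau k, grid h tau k + h)]. *)
Definition grid (h tau : R) (k : Z) : R := IZR k * h - tau.

Definition cell (h tau s : R) : Z := (up ((s + tau) / h) - 1)%Z.

Lemma grid_succ h tau k : grid h tau (k + 1) = grid h tau k + h.
Proof. unfold grid. rewrite plus_IZR. simpl. ring. Qed.

Lemma grid_0 h tau : grid h tau 0 = - tau.
Proof. unfold grid. simpl. ring. Qed.

Lemma grid_pred h tau k : grid h tau (k - 1) + h = grid h tau k.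
Proof. rewrite <- grid_succ. f_equal. ring. Qed.

Section Grid.
Variable h : R.
Hypothesis h_pos : 0 < h.

Lemma cell_spec tau s : grid h tau (cell h tau s) <= s < grid h tau (cell h tau s) + h.
Proof.
  unfold grid, cell. destruct (archimed ((s + tau) / h)) as [H1 H2].
  rewrite minus_IZR. set (r := (s + tau) / h) in *.
  assert (s + tau = r * h) by (unfold r; field; lra). simpl. nra.
Qed.

Lemma cell_unique tau s k : grid h tau k <= s < grid h tau k + h -> cell h tau s = k.
Proof.
  unfold grid, cell. intros [H1 H2]. set (r := (s + tau) / h).
  assert (Hr : s + tau = r * h) by (unfold r; field; lra).
  assert (IZR k <= r) by nra. assert (r < IZR k + 1) by nra.
  enough ((k + 1)%Z = up r) by lia.
  apply tech_up; rewrite plus_IZR; simpl; lra.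
Qed.

Lemma cell_grid_end tau k : cell h tau (grid h tau k + h) = (k + 1)%Z.
Proof. apply cell_unique. rewrite grid_succ. lra. Qed.

Lemma grid_le tau k l : (k <= l)%Z -> grid h tau k <= grid h tau l.
Proof. intros Hkl. apply IZR_le in Hkl. unfold grid. nra. Qed.

Lemma cell_le tau s t : s <= t -> (cell h tau s <= cell h tau t)%Z.
Proof.
  intros Hst. destruct (Z_le_gt_dec (cell h tau s) (cell h tau t)) as [|Hlt]; [easy|].
  pose proof (cell_spec tau s). pose proof (cell_spec tau t).
  assert (grid h tau (cell h tau t + 1) <= grid h tau (cell h tau s)) by (apply grid_le; lia).
  rewrite grid_succ in *. lra.
Qed.

End Grid.

Fixpoint orbit_fwd {A} (F : Z -> A -> A) (k0 : Z) (p0 : A) (j : nat) : A :=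
  match j with O => p0 | S j' => F (k0 + Z.of_nat j')%Z (orbit_fwd F k0 p0 j') end.

Fixpoint orbit_bwd {A} (B : Z -> A -> A) (k0 : Z) (p0 : A) (j : nat) : A :=
  match j with O => p0 | S j' => B (k0 - Z.of_nat j' - 1)%Z (orbit_bwd B k0 p0 j') end.

Definition zorbit {A} (F B : Z -> A -> A) (k0 : Z) (p0 : A) (k : Z) : A :=
  if Z_le_dec k0 k then orbit_fwd F k0 p0 (Z.to_nat (k - k0))
  else orbit_bwd B k0 p0 (Z.to_nat (k0 - k)).

Lemma zorbit_base {A} (F B : Z -> A -> A) k0 p0 : zorbit F B k0 p0 k0 = p0.
Proof.
  unfold zorbit. destruct (Z_le_dec k0 k0); [|lia]. now rewrite Z.sub_diag.
Qed.

Lemma zorbit_succ {A} (F B : Z -> A -> A) k0 p0 k :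
  (forall k y, F k (B k y) = y) ->
  zorbit F B k0 p0 (k + 1) = F k (zorbit F B k0 p0 k).
Proof.
  intros FB. unfold zorbit.
  destruct (Z_le_dec k0 (k + 1)), (Z_le_dec k0 k); try lia.
  - replace (Z.to_nat (k + 1 - k0)) with (S (Z.to_nat (k - k0))) by lia. simpl.
    now replace (k0 + Z.of_nat (Z.to_nat (k - k0)))%Z with k by lia.
  - assert (k = (k0 - 1)%Z) by lia. subst k.
    replace (k0 - 1 + 1 - k0)%Z with 0%Z by lia.
    replace (Z.to_nat (k0 - (k0 - 1))) with 1%nat by lia. simpl.
    replace (k0 - 0 - 1)%Z with (k0 - 1)%Z by lia. now rewrite FB.
  - replace (Z.to_nat (k0 - k)) with (S (Z.to_nat (k0 - (k + 1)))) by lia. simpl.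
    replace (k0 - Z.of_nat (Z.to_nat (k0 - (k + 1))) - 1)%Z with k by lia.
    now rewrite FB.
Qed.

Definition cellwise {M} (flow : nat -> R -> M -> M) (c : Z -> nat) (h tau : R) (gam : R -> M) :=
  forall k u v, grid h tau k <= u <= grid h tau k + h -> grid h tau k <= v <= grid h tau k + h ->
    gam u = flow (c k) (u - v) (gam v).

Section CellwiseGrid.
Variables (M : Type) (flow : nat -> R -> M -> M) (c : Z -> nat) (h tau : R) (gam : R -> M).
Hypothesis gam_cellwise : cellwise flow c h tau gam.

Lemma cellwise_on_cell k t : grid h tau k <= t <= grid h tau k + h ->
  gam t = flow (c k) (t - grid h tau k) (gam (grid h tau k)).
Proof. intros Ht. apply gam_cellwise; lra. Qed.

Lemma cellwise_grid_succ k : 0 <= h ->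
  gam (grid h tau (k + 1)) = flow (c k) h (gam (grid h tau k)).
Proof.
  intros Hh. rewrite grid_succ, (cellwise_on_cell k) by lra. f_equal. ring.
Qed.

Lemma cellwise_grid_pred k : 0 <= h ->
  gam (grid h tau (k - 1)) = flow (c (k - 1)%Z) (- h) (gam (grid h tau k)).
Proof.
  intros Hh. rewrite <- (grid_pred h tau k), (gam_cellwise (k - 1)%Z _ (grid h tau (k - 1) + h))
    by lra.
  f_equal. ring.
Qed.

End CellwiseGrid.

(** The solution through [x0] for the signal [s |-> c (cell h tau s)]; its values at the grid
    points are the orbit of the time-[h] maps, anchored at the start of the cell of [0]. *)
Definition signal_nodes {M} (flow : nat -> R -> M -> M) (c : Z -> nat) (h tau : R) (x0 : M) :
    Z -> M :=
  let k0 := cell h tau 0 in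
  zorbit (fun k => flow (c k) h) (fun k => flow (c k) (- h)) k0 (flow (c k0) (grid h tau k0) x0).

Definition signal_solution {M} (flow : nat -> R -> M -> M) (c : Z -> nat) (h tau : R) (x0 : M)
    (t : R) : M :=
  let k := cell h tau t in
  flow (c k) (t - grid h tau k) (signal_nodes flow c h tau x0 k).

Section SignalSolution.
Variables (M : Type) (dM : M -> M -> R) (flow : nat -> R -> M -> M) (c : Z -> nat) (h tau : R).
Hypothesis flow_c : forall k, is_cont_flow dM (flow (c k)).
Hypothesis h_pos : 0 < h.
Variable x0 : M.

Lemma signal_nodes_succ k :
  signal_nodes flow c h tau x0 (k + 1) = flow (c k) h (signal_nodes flow c h tau x0 k).
Proof.
  apply (zorbit_succ (fun k => flow (c k) h) (fun k => flow (c k) (- h))). intros j y.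
  rewrite (flow_add _ _ _ (flow_c j)), Rplus_opp_r. apply (flow_zero _ _ _ (flow_c j)).
Qed.

Lemma signal_solution_on_cell k u : grid h tau k <= u <= grid h tau k + h ->
  signal_solution flow c h tau x0 u =
    flow (c k) (u - grid h tau k) (signal_nodes flow c h tau x0 k).
Proof.
  intros Hu. unfold signal_solution. destruct (Rlt_dec u (grid h tau k + h)).
  - now rewrite (cell_unique h h_pos tau u k) by lra.
  - assert (Hend : u = grid h tau k + h) by lra. subst u.
    rewrite (cell_grid_end h h_pos), signal_nodes_succ.
    rewrite grid_succ, Rminus_diag, (flow_zero _ _ _ (flow_c _)). f_equal. ring.
Qed.

Lemma signal_solution_cellwise : cellwise flow c h tau (signal_solution flow c h tau x0).
Proof.
  intros k u v Hu Hv. rewrite !(signal_solution_on_cell k) by assumption.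
  rewrite (flow_add _ _ _ (flow_c k)). f_equal. ring.
Qed.

Lemma signal_solution_0 : signal_solution flow c h tau x0 0 = x0.
Proof.
  unfold signal_solution, signal_nodes. rewrite zorbit_base, (flow_add _ _ _ (flow_c _)).
  replace (0 - _ + _) with 0 by ring. apply (flow_zero _ _ _ (flow_c _)).
Qed.

End SignalSolution.

Section Cellwise.
Variables (M : Type) (dM : M -> M -> R) (flow : nat -> R -> M -> M) (c : Z -> nat) (h tau : R).
Hypothesis dM_metric : is_metric dM.
Hypothesis flow_c : forall k, is_cont_flow dM (flow (c k)).
Hypothesis h_pos : 0 < h.
Variable gam : R -> M.
Hypothesis gam_cellwise : cellwise flow c h tau gam.

Lemma cellwise_continuous t : continuous_at dM gam t.
Proof.
  set (k := cell h tau t). pose proof (cell_spec h h_pos tau t) as Ht. fold k in Ht.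
  assert (Hleft : exists r kl, 0 < r /\ r <= grid h tau k + h - t /\
            grid h tau kl <= t - r /\ t <= grid h tau kl + h).
  { destruct (Rlt_dec (grid h tau k) t).
    - exists (Rmin (t - grid h tau k) (grid h tau k + h - t)), k.
      pose proof (Rmin_l (t - grid h tau k) (grid h tau k + h - t)).
      pose proof (Rmin_r (t - grid h tau k) (grid h tau k + h - t)).
      split; [apply Rmin_pos|]; lra.
    - exists h, (k - 1)%Z. rewrite <- (grid_pred h tau k) in *. lra. }
  destruct Hleft as (r & kl & Hr & Hrk & Hkl1 & Hkl2).
  apply (continuous_at_glue dM gam (fun u => flow (c k) (u - t) (gam t))
           (fun u => flow (c kl) (u - t) (gam t)) t r Hr).
  - intros u Hu. apply gam_cellwise; lra.
  - intros u Hu. apply gam_cellwise; lra.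
  - rewrite Rminus_diag. apply flow_c.
  - rewrite Rminus_diag. apply flow_c.
  - now apply flow_orbit_continuous.
  - now apply flow_orbit_continuous.
Qed.

Section ConstantSignal.
Variables (i : nat) (a b : R).
Hypothesis signal_const : forall u, a < u < b -> c (cell h tau u) = i.
Hypothesis flow_i : is_cont_flow dM (flow i).

Lemma cellwise_flow_in_cell s t : a <= s <= t -> t <= b ->
  t <= grid h tau (cell h tau s) + h -> gam t = flow i (t - s) (gam s).
Proof.
  intros Hs Ht Hend. pose proof (cell_spec h h_pos tau s) as Hsk.
  destruct (Req_dec s t) as [<-|Hst]; [now rewrite Rminus_diag, (flow_zero _ _ _ flow_i)|].
  rewrite <- (signal_const ((s + t) / 2)) by lra.
  rewrite (cell_unique h h_pos tau ((s + t) / 2) (cell h tau s)) by lra.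
  apply gam_cellwise; lra.
Qed.

Lemma cellwise_flow_forward D s t : a <= s <= t -> t <= b ->
  (cell h tau t - cell h tau s <= Z.of_nat D)%Z -> gam t = flow i (t - s) (gam s).
Proof.
  revert s. induction D as [|D IH]; intros s Hs Ht HD;
    (destruct (Rle_dec t (grid h tau (cell h tau s) + h)) as [Hin|Hout];
      [now apply cellwise_flow_in_cell|]);
    pose proof (cell_spec h h_pos tau s) as Hsk;
    set (s' := grid h tau (cell h tau s) + h) in *;
    assert (Hs' : cell h tau s' = (cell h tau s + 1)%Z) by apply (cell_grid_end h h_pos);
    pose proof (cell_le h h_pos tau s' t ltac:(lra)).
  - lia.
  - rewrite (IH s'); [|lra|lra|lia].
    rewrite (cellwise_flow_in_cell s s'), (flow_add _ _ _ flow_i); [|lra|lra|apply Rle_refl].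
    f_equal. ring.
Qed.

Lemma cellwise_flow_le s t : a <= s <= t -> t <= b -> gam t = flow i (t - s) (gam s).
Proof.
  intros Hs Ht. pose proof (cell_le h h_pos tau s t ltac:(lra)).
  apply (cellwise_flow_forward (Z.to_nat (cell h tau t - cell h tau s))); [lra|lra|lia].
Qed.

End ConstantSignal.

Lemma cellwise_solution x : gam 0 = x ->
  is_solution dM flow x (fun s => c (cell h tau s)) gam.
Proof.
  intros Hx. split; [exact Hx|split; [exact cellwise_continuous|]].
  intros i a b Hab Hconst s t Hs Ht.
  assert (flow_i : is_cont_flow dM (flow i))
    by (rewrite <- (Hconst ((a + b) / 2)) by lra; apply flow_c).
  destruct (Rle_dec s t).
  - apply (cellwise_flow_le i a b Hconst flow_i); lra.
  - rewrite (cellwise_flow_le i a b Hconst flow_i t s), (flow_add _ _ _ flow_i) by lra.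
    replace (t - s + (s - t)) with 0 by ring. now rewrite (flow_zero _ _ _ flow_i).
Qed.

End Cellwise.

Definition is_walk (n : nat) (G : nat -> nat -> Prop) (c : Z -> nat) : Prop :=
  forall k, (1 <= c k <= n)%nat /\ G (c k) (c (k + 1)%Z).

Section Signals.
Variables (n : nat) (G : nat -> nat -> Prop) (h : R).
Hypothesis h_pos : 0 < h.

Lemma cell_0_unique k t : IZR k * h <= t < (IZR k + 1) * h -> cell h 0 t = k.
Proof. intros Ht. apply (cell_unique h h_pos). unfold grid. lra. Qed.

Lemma walk_in_Delta c tau : is_walk n G c -> in_Delta n G h (fun s => c (cell h tau s)).
Proof.
  intros Hc. exists (fun u => c (cell h 0 u)), tau. split; [split|].
  - intros k t Ht. now rewrite (cell_0_unique k t), (cell_0_unique k (IZR k * h)) by lra.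
  - intros k. rewrite (cell_0_unique k (IZR k * h)), (cell_0_unique (k + 1) ((IZR k + 1) * h))
      by (rewrite ?plus_IZR; simpl; lra).
    destruct (Hc k) as [[? ?] ?]. auto.
  - intros s. unfold cell. now rewrite Rplus_0_r.
Qed.

Lemma Delta_walk f : in_Delta n G h f ->
  exists tau c, 0 <= tau < h /\ is_walk n G c /\
    forall k s, grid h tau k <= s < grid h tau k + h -> f s = c k.
Proof.
  intros (x & t0 & (Hconst & Hwalk) & Hf).
  set (j := cell h 0 t0). pose proof (cell_spec h h_pos 0 t0) as Hj. fold j in Hj.
  unfold grid in Hj.
  exists (t0 - IZR j * h), (fun k => x (IZR (k + j) * h)). split; [lra|split].
  - intros k. destruct (Hwalk (k + j)%Z) as (Hlo & Hhi & HG). split; [lia|].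
    replace (IZR (k + 1 + j) * h) with ((IZR (k + j) + 1) * h); [exact HG|].
    rewrite !plus_IZR. simpl. ring.
  - intros k s Hs. unfold grid in Hs. rewrite Hf. apply Hconst. rewrite plus_IZR. lra.
Qed.

End Signals.

Lemma solution_cellwise {M} (dM : M -> M -> R) flow (x : M) f gam h tau c :
  is_solution dM flow x f gam -> 0 < h ->
  (forall k s, grid h tau k <= s < grid h tau k + h -> f s = c k) ->
  cellwise flow c h tau gam.
Proof.
  intros (_ & _ & Hsol) Hh Hf k u v Hu Hv.
  apply (Hsol (c k) (grid h tau k) (grid h tau k + h)); try lra.
  intros w Hw. apply Hf. lra.
Qed.

Lemma cluster_point (taus : nat -> R) a b : (forall m, a <= taus m <= b) ->
  exists tau, a <= tau <= b /\
    forall eps, 0 < eps -> forall M0, exists m, (M0 <= m)%nat /\ Rabs (taus m - tau) < eps.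
Proof.
  intros Hab. destruct (Bolzano_Weierstrass taus _ (compact_P3 a b) Hab) as [l Hl].
  assert (Hcl : forall eps, 0 < eps ->
            forall M0, exists m, (M0 <= m)%nat /\ Rabs (taus m - l) < eps).
  { intros eps Heps M0.
    destruct (Hl (disc l (mkposreal eps Heps)) M0) as (m & Hm & Hdisc); [|now exists m].
    exists (mkposreal eps Heps). now intros y Hy. }
  exists l. split; [split|exact Hcl]; apply Rnot_lt_le; intros Hout.
  - destruct (Hcl (a - l) ltac:(lra) 0%nat) as (m & _ & Hm).
    apply Rabs_def2 in Hm. specialize (Hab m). lra.
  - destruct (Hcl (l - b) ltac:(lra) 0%nat) as (m & _ & Hm).
    apply Rabs_def2 in Hm. specialize (Hab m). lra.
Qed.

Lemma pigeonhole_frequently (P : R -> nat -> Prop) (q : nat -> nat) b :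
  (forall eps eps' m, 0 < eps <= eps' -> P eps m -> P eps' m) ->
  (forall eps, 0 < eps -> forall M0, exists m, (M0 <= m)%nat /\ P eps m /\ (q m <= b)%nat) ->
  exists v, forall eps, 0 < eps -> forall M0, exists m, (M0 <= m)%nat /\ P eps m /\ q m = v.
Proof.
  intros Pmono. induction b as [|b IH]; intros Hfreq.
  { exists 0%nat. intros eps Heps M0. destruct (Hfreq eps Heps M0) as (m & ? & ? & ?).
    exists m. repeat split; auto; lia. }
  destruct (classic (forall eps, 0 < eps -> forall M0,
                       exists m, (M0 <= m)%nat /\ P eps m /\ q m = S b)) as [Hb|Hb];
    [now exists (S b)|].
  apply not_all_ex_not in Hb as [eps0 Hb]. apply imply_to_and in Hb as [Heps0 Hb].
  apply not_all_ex_not in Hb as [M1 Hb].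
  apply IH. intros eps Heps M0.
  assert (Hmin : 0 < Rmin eps eps0) by now apply Rmin_pos.
  destruct (Hfreq _ Hmin (Nat.max M0 M1)) as (m & Hm & HP & Hq).
  assert (P eps m) by (apply (Pmono (Rmin eps eps0)); [split; [lra|apply Rmin_l]|exact HP]).
  assert (P eps0 m) by (apply (Pmono (Rmin eps eps0)); [split; [lra|apply Rmin_r]|exact HP]).
  exists m. repeat split; [lia|assumption|].
  destruct (Nat.eq_dec (q m) (S b)); [|lia].
  exfalso. apply Hb. exists m. repeat split; [lia|assumption..].
Qed.

Definition window (N : nat) (k : Z) : Prop := (Z.abs k < Z.of_nat N)%Z.

Definition fupd (g : Z -> nat) (k0 : Z) (v : nat) (k : Z) : nat :=
  if Z.eq_dec k k0 then v else g k.

Section Diagonal.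
Variables (taus : nat -> R) (tau : R) (cs : nat -> Z -> nat) (n : nat).
Hypothesis cs_bounded : forall m k, (cs m k <= n)%nat.
Hypothesis tau_cluster :
  forall eps, 0 < eps -> forall M0, exists m, (M0 <= m)%nat /\ Rabs (taus m - tau) < eps.

Definition recurrent (W : Z -> Prop) (g : Z -> nat) : Prop :=
  forall eps, 0 < eps -> forall M0, exists m, (M0 <= m)%nat /\ Rabs (taus m - tau) < eps /\
    forall k, W k -> cs m k = g k.

Lemma recurrent_mono W g W' g' : recurrent W g ->
  (forall k, W' k -> W k /\ g k = g' k) -> recurrent W' g'.
Proof.
  intros Hrec HW eps Heps M0. destruct (Hrec eps Heps M0) as (m & Hm & Htau & Hagree).
  exists m. repeat split; [assumption..|]. intros k Hk.
  destruct (HW k Hk) as [HWk <-]. now apply Hagree.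
Qed.

Lemma recurrent_extend W g k0 : recurrent W g ->
  exists v, recurrent (fun k => W k \/ k = k0) (fupd g k0 v).
Proof.
  intros Hrec.
  destruct (pigeonhole_frequently
              (fun eps m => Rabs (taus m - tau) < eps /\ forall k, W k -> cs m k = g k)
              (fun m => cs m k0) n) as [v Hv].
  - intros eps eps' m Heps [Htau Hagree]. split; [lra|exact Hagree].
  - intros eps Heps M0. destruct (Hrec eps Heps M0) as (m & ? & ? & ?).
    exists m. auto.
  - exists v. intros eps Heps M0. destruct (Hv eps Heps M0) as (m & Hm & [Htau Hagree] & Hk0).
    exists m. repeat split; [assumption..|]. unfold fupd.
    intros k [Hk | Hk]; destruct (Z.eq_dec k k0); subst; auto; congruence.
Qed.

Lemma recurrent_window_succ N g : recurrent (window N) g ->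
  exists g', recurrent (window (S N)) g' /\ forall k, window N k -> g' k = g k.
Proof.
  intros Hrec.
  destruct (recurrent_extend _ _ (Z.of_nat N) Hrec) as [v1 Hrec1].
  destruct (recurrent_extend _ _ (- Z.of_nat N)%Z Hrec1) as [v2 Hrec2].
  exists (fupd (fupd g (Z.of_nat N) v1) (- Z.of_nat N)%Z v2).
  split.
  { apply (recurrent_mono _ _ _ _ Hrec2). intros k Hk. split; [unfold window in *; lia|auto]. }
  intros k Hk. unfold fupd, window in *.
  destruct (Z.eq_dec k (- Z.of_nat N)), (Z.eq_dec k (Z.of_nat N)); lia || reflexivity.
Qed.

Lemma recurrent_diagonal : exists c, forall N, recurrent (window N) c.
Proof.
  assert (Hstep : forall p : (Z -> nat) * nat, exists g',
    (recurrent (window (snd p)) (fst p) -> recurrent (window (S (snd p))) g') /\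
    forall k, window (snd p) k -> g' k = fst p k).
  { intros [g N]. simpl. destruct (classic (recurrent (window N) g)) as [Hg|Hg].
    - destruct (recurrent_window_succ N g Hg) as (g' & ? & ?). now exists g'.
    - exists g. tauto. }
  destruct (choice _ Hstep) as [step Hs].
  set (gs := fix gs (N : nat) : Z -> nat :=
         match N with O => fun _ => 0%nat | S N' => step (gs N', N') end).
  assert (Hrec : forall N, recurrent (window N) (gs N)).
  { induction N as [|N IH].
    - intros eps Heps M0. destruct (tau_cluster eps Heps M0) as (m & ? & ?).
      exists m. repeat split; [assumption..|]. unfold window. simpl. lia.
    - exact (proj1 (Hs (gs N, N)) IH). }
  assert (Hcoh : forall N d k, window N k -> gs (d + N)%nat k = gs N k).
  { intros N d k Hk. induction d as [|d IH]; [reflexivity|].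
    simpl. rewrite (proj2 (Hs (gs (d + N)%nat, (d + N)%nat))); [exact IH|].
    unfold window in *. simpl. lia. }
  exists (fun k => gs (S (Z.abs_nat k)) k). intros N.
  apply (recurrent_mono _ _ _ _ (Hrec N)). intros k Hk. split; [exact Hk|].
  unfold window in Hk. replace N with ((N - S (Z.abs_nat k)) + S (Z.abs_nat k))%nat by lia.
  apply Hcoh. unfold window. lia.
Qed.

End Diagonal.

Section LimitTrajectory.
Variables (M : Type) (dM : M -> M -> R) (flow : nat -> R -> M -> M) (h : R).
Hypothesis h_pos : 0 < h.
Variables (x : M) (e : nat -> M) (taus : nat -> R) (cs : nat -> Z -> nat) (gams : nat -> R -> M).
Hypothesis e_close : forall m, dM x (e m) < / (INR m + 1).
Hypothesis taus_range : forall m, 0 <= taus m <= h.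
Hypothesis gams_cellwise : forall m, cellwise flow (cs m) h (taus m) (gams m).
Hypothesis gams_0 : forall m, gams m 0 = e m.
Variables (tau : R) (c : Z -> nat).
Hypothesis tau_range : 0 <= tau <= h.
Hypothesis c_recurrent : forall N, recurrent taus tau cs (window N) c.
Hypothesis flow_c : forall k, is_cont_flow dM (flow (c k)).
Variable gam : R -> M.
Hypothesis gam_cellwise : cellwise flow c h tau gam.
Hypothesis gam_0 : gam 0 = x.

(** A filter on the indices; [c_recurrent] says exactly that it is proper. *)
Definition eventually (P : nat -> Prop) : Prop :=
  exists del N M0, 0 < del /\ forall m, (M0 <= m)%nat -> Rabs (taus m - tau) < del ->
    (forall k, window N k -> cs m k = c k) -> P m.

Lemma eventually_and P Q : eventually P -> eventually Q -> eventually (fun m => P m /\ Q m).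
Proof.
  intros (d1 & N1 & M1 & Hd1 & HP) (d2 & N2 & M2 & Hd2 & HQ).
  exists (Rmin d1 d2), (Nat.max N1 N2), (Nat.max M1 M2). split; [now apply Rmin_pos|].
  pose proof (Rmin_l d1 d2). pose proof (Rmin_r d1 d2).
  intros m Hm Htau Hagree. split; [apply HP|apply HQ]; try lra; try lia;
    intros k Hk; apply Hagree; unfold window in *; lia.
Qed.

Lemma eventually_impl (P Q : nat -> Prop) : eventually P -> (forall m, P m -> Q m) -> eventually Q.
Proof.
  intros (del & N & M0 & Hdel & HP) HPQ. exists del, N, M0. split; [exact Hdel|]. auto.
Qed.

Lemma eventually_exists P : eventually P -> exists m, P m.
Proof.
  intros (del & N & M0 & Hdel & HP). destruct (c_recurrent N del Hdel M0) as (m & ? & ? & ?).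
  exists m. auto.
Qed.

Lemma eventually_agree k : eventually (fun m => cs m k = c k).
Proof.
  exists 1, (S (Z.abs_nat k)), 0%nat. split; [lra|]. intros m _ _ Hagree.
  apply Hagree. unfold window. lia.
Qed.

Lemma eventually_tau_close del : 0 < del -> eventually (fun m => Rabs (taus m - tau) < del).
Proof. intros Hdel. exists del, 0%nat, 0%nat. split; auto. Qed.

Lemma eventually_e_close del : 0 < del -> eventually (fun m => dM x (e m) < del).
Proof.
  intros Hdel. destruct (archimed_cor1 del Hdel) as (N & HN & HN0).
  exists 1, 0%nat, N. split; [lra|]. intros m Hm _ _.
  apply Rlt_trans with (/ (INR m + 1)); [apply e_close|].
  apply Rle_lt_trans with (/ INR N); [|exact HN].
  apply le_INR in Hm. apply lt_INR in HN0. simpl in HN0. apply Rinv_le_contravar; lra.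
Qed.

Lemma eventually_flow_close j s p q eps : 0 < eps ->
  (forall del, 0 < del -> eventually (fun m => dM p (q m) < del)) ->
  eventually (fun m => dM (flow (c j) s p) (flow (cs m j) s (q m)) < eps).
Proof.
  intros Heps Hq. destruct (flow_continuous_space _ _ _ (flow_c j) s p eps Heps)
    as (del & Hdel & Hcont).
  apply (eventually_impl _ _ (eventually_and _ _ (eventually_agree j) (Hq del Hdel))).
  intros m (-> & Hclose). now apply Hcont.
Qed.

Lemma grid_nodes_close k eps : 0 < eps ->
  eventually (fun m => dM (gam (grid h tau k)) (gams m (grid h (taus m) k)) < eps).
Proof.
  revert eps. induction k as [|k IH|k IH] using Z.peano_ind; intros eps Heps.
  - destruct (proj2 (proj2 (flow_c 0%Z)) (- tau) x eps Heps) as (del & Hdel & Hcont).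
    apply (eventually_impl _ _ (eventually_and _ _ (eventually_agree 0)
             (eventually_and _ _ (eventually_tau_close del Hdel) (eventually_e_close del Hdel)))).
    intros m (Hagree & Htau & He). pose proof (taus_range m).
    rewrite !grid_0, (gam_cellwise 0%Z (- tau) 0), (gams_cellwise m 0%Z (- taus m) 0)
      by (rewrite grid_0; lra).
    rewrite gams_0, gam_0, Hagree, !Rminus_0_r. apply Hcont; [|exact He].
    now replace (- taus m - - tau) with (- (taus m - tau)) by ring; rewrite Rabs_Ropp.
  - apply (eventually_impl _ _ (eventually_flow_close k h _ _ eps Heps IH)). intros m.
    rewrite <- Z.add_1_r, (cellwise_grid_succ _ _ _ _ _ _ gam_cellwise),
      (cellwise_grid_succ _ _ _ _ _ _ (gams_cellwise m)); lra.
  - apply (eventually_impl _ _ (eventually_flow_close (k - 1) (- h) _ _ eps Heps IH)). intros m.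
    rewrite <- Z.sub_1_r, (cellwise_grid_pred _ _ _ _ _ _ gam_cellwise),
      (cellwise_grid_pred _ _ _ _ _ _ (gams_cellwise m)); lra.
Qed.

Lemma limit_trajectory_adherent t r : 0 < r -> exists m s, dM (gam t) (gams m s) < r.
Proof.
  intros Hr. set (k := cell h tau t). pose proof (cell_spec h h_pos tau t) as Ht. fold k in Ht.
  destruct (eventually_exists _ (eventually_flow_close k (t - grid h tau k) _ _ r Hr
                                   (grid_nodes_close k))) as [m Hclose].
  exists m, (t - grid h tau k + grid h (taus m) k).
  rewrite (cellwise_on_cell _ _ _ _ _ _ gam_cellwise k t),
    (cellwise_on_cell _ _ _ _ _ _ (gams_cellwise m) k) by lra.
  now replace (_ + grid h (taus m) k - _) with (t - grid h tau k) by ring.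
Qed.

End LimitTrajectory.

Lemma recurrent_walk taus tau cs n G c :
  (forall m, is_walk n G (cs m)) -> (forall N, recurrent taus tau cs (window N) c) ->
  is_walk n G c.
Proof.
  intros Hcs Hrec k.
  destruct (Hrec (S (S (Z.abs_nat k))) 1 ltac:(lra) 0%nat) as (m & _ & _ & Hagree).
  rewrite <- !Hagree by (unfold window; lia). apply Hcs.
Qed.

Definition adherent {M} (dM : M -> M -> R) (E : M -> Prop) (z : M) : Prop :=
  forall r, 0 < r -> exists y, E y /\ dM z y < r.

Section ChainSets.
Variables (M : Type) (dM : M -> M -> R) (n : nat) (G : nat -> nat -> Prop) (h : R)
  (flow : nat -> R -> M -> M).
Hypothesis dM_metric : is_metric dM.
Hypothesis h_pos : 0 < h.
Hypothesis flows : forall i, (1 <= i <= n)%nat -> is_cont_flow dM (flow i).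
Variable E : M -> Prop.
Hypothesis E_chain : chain_set dM n G h flow E.

Lemma walk_flows c : is_walk n G c -> forall k, is_cont_flow dM (flow (c k)).
Proof. intros Hc k. apply flows, Hc. Qed.

Lemma approximating_trajectories z : adherent dM E z ->
  exists (e : nat -> M) taus cs gams,
    (forall m, dM z (e m) < / (INR m + 1)) /\ (forall m, 0 <= taus m <= h) /\
    (forall m, is_walk n G (cs m)) /\ (forall m, cellwise flow (cs m) h (taus m) (gams m)) /\
    (forall m, gams m 0 = e m) /\ (forall m t, E (gams m t)).
Proof.
  intros Hz.
  assert (Hm : forall m : nat, exists p : M * R * (Z -> nat) * (R -> M),
    let '(e, tau, c, gam) := p in
    dM z e < / (INR m + 1) /\ 0 <= tau <= h /\ is_walk n G c /\
    cellwise flow c h tau gam /\ gam 0 = e /\ forall t, E (gam t)).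
  { intros m.
    assert (Hpos : 0 < / (INR m + 1)) by (apply Rinv_0_lt_compat; pose proof (pos_INR m); lra).
    destruct (Hz _ Hpos) as (e & He & Hd).
    destruct (proj1 E_chain e He) as (f & gam & Hf & Hsol & Hin).
    destruct (Delta_walk n G h h_pos f Hf) as (tau & c & Htau & Hc & Hcells).
    exists (e, tau, c, gam).
    split; [exact Hd|split; [lra|split; [exact Hc|split; [|split; [apply Hsol|exact Hin]]]]].
    exact (solution_cellwise dM flow e f gam h tau c Hsol h_pos Hcells). }
  destruct (choice _ Hm) as [F HF].
  exists (fun m => fst (fst (fst (F m)))), (fun m => snd (fst (fst (F m)))),
    (fun m => snd (fst (F m))), (fun m => snd (F m)).
  split; [|split; [|split; [|split; [|split]]]]; intros m; specialize (HF m);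
    destruct (F m) as [[[e tau] c] gam]; simpl; tauto.
Qed.

Lemma adherent_trajectory z : adherent dM E z ->
  exists f gam, in_Delta n G h f /\ is_solution dM flow z f gam /\ forall t, adherent dM E (gam t).
Proof.
  intros Hz.
  destruct (approximating_trajectories z Hz)
    as (e & taus & cs & gams & He & Htaus & Hcs & Hcell & Hg0 & HgE).
  destruct (cluster_point taus 0 h Htaus) as (tau & Htau & Hcluster).
  destruct (recurrent_diagonal taus tau cs n) as [c Hc]; [intros m k; apply Hcs|exact Hcluster|].
  pose proof (recurrent_walk taus tau cs n G c Hcs Hc) as Hwalk.
  pose proof (walk_flows c Hwalk) as flow_c.
  set (gam := signal_solution flow c h tau z).
  assert (gam_cellwise : cellwise flow c h tau gam) by now apply (signal_solution_cellwise _ dM).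
  assert (gam_0 : gam 0 = z) by now apply (signal_solution_0 _ dM).
  exists (fun s => c (cell h tau s)), gam. split; [|split].
  - now apply walk_in_Delta.
  - now apply (cellwise_solution _ dM).
  - intros t r Hr.
    destruct (limit_trajectory_adherent _ dM flow h h_pos z e taus cs gams He Htaus Hcell Hg0
                tau c Htau Hc flow_c gam gam_cellwise gam_0 t r Hr) as (m & s & Hd).
    exists (gams m s). auto.
Qed.

Lemma adherent_chain_set : chain_set dM n G h flow (adherent dM E).
Proof.
  split; [exact adherent_trajectory|].
  intros z w Hz Hw eps T Heps HT.
  destruct (adherent_trajectory z Hz) as (f & gam & Hf & Hsol & Hin).
  destruct (Hin T (eps / 2) ltac:(lra)) as (e1 & He1 & Hd1).
  destruct (Hw (eps / 2) ltac:(lra)) as (e2 & He2 & Hd2).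
  destruct (proj2 E_chain e1 e2 He1 He2 (eps / 2) T ltac:(lra) HT)
    as (k & xs & fs & ts & Hk & Hx0 & Hxk & Hsteps).
  (* Follow [gam] up to time [T], jump to [e1], then follow the old chain, redirecting its last
     jump from [e2] to [w]. *)
  exists (S k), (fun j => match j with O => z | S j' => if Nat.eq_dec j' k then w else xs j' end),
    (fun j => match j with O => f | S j' => fs j' end),
    (fun j => match j with O => T | S j' => ts j' end).
  split; [lia|split; [reflexivity|split; [now destruct (Nat.eq_dec k k)|]]].
  intros [|j] Hj.
  - split; [exact Hf|split; [lra|]]. exists gam. split; [exact Hsol|].
    destruct (Nat.eq_dec 0 k); [lia|]. rewrite Hx0. lra.
  - destruct (Hsteps j ltac:(lia)) as (Hfj & HTj & g & Hg & Hgd).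
    split; [exact Hfj|split; [exact HTj|]]. exists g.
    destruct (Nat.eq_dec j k); [lia|]. split; [exact Hg|].
    destruct (Nat.eq_dec (S j) k) as [<-|]; [|lra].
    destruct dM_metric as (_ & _ & Hsym & Htri). rewrite Hxk in Hgd.
    pose proof (Htri (g (ts j)) e2 w). rewrite (Hsym e2 w) in *. lra.
Qed.

End ChainSets.

Lemma closed_of_adherent {M} (dM : M -> M -> R) (E : M -> Prop) :
  (forall z, adherent dM E z -> E z) -> m_closed dM E.
Proof.
  intros Hcl x Hx. apply NNPP. intros Hno. apply Hx, Hcl. intros r Hr.
  apply NNPP. intros Hn. apply Hno. exists r. split; [exact Hr|]. intros y Hy HEy.
  apply Hn. now exists y.
Qed.

Lemma compact_of_closed {M} (dM : M -> M -> R) (K : M -> Prop) :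
  m_compact_space dM -> m_closed dM K -> m_compact dM K.
Proof.
  intros Hspace Hclosed I U HU Hcov.
  destruct (Hspace (option I) (fun o x => match o with Some i => U i x | None => ~ K x end))
    as [l Hl].
  - intros [i|]; [apply HU|apply Hclosed].
  - intros x _. destruct (classic (K x)) as [Hx|Hx].
    + destruct (Hcov x Hx) as [i Hi]. now exists (Some i).
    + now exists None.
  - exists (flat_map (fun o => match o with Some i => i :: nil | None => nil end) l).
    intros x Hx. destruct (Hl x Logic.I) as [[i|] [Hin Hi]]; [|contradiction].
    exists i. split; [|exact Hi]. apply in_flat_map. exists (Some i). split; [exact Hin|now left].
Qed.

Theorem mainTheorem15
  (M : Type) (dM : M -> M -> R) (n : nat) (G : nat -> nat -> Prop) (h : R)
  (flow : nat -> R -> M -> M) (E : M -> Prop) :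
  is_metric dM -> m_compact_space dM -> 0 < h ->
  (forall i, (1 <= i <= n)%nat -> is_cont_flow dM (flow i)) ->
  maximal_chain_set dM n G h flow E ->
  m_closed dM E /\ m_compact dM E.
Proof.
  intros Hm Hcomp Hh Hflows [HE Hmax].
  assert (Hclosed : m_closed dM E).
  { apply closed_of_adherent, (Hmax (adherent dM E)).
    - now apply adherent_chain_set.
    - intros x Hx r Hr. exists x. split; [exact Hx|]. now rewrite metric_refl. }
  split; [exact Hclosed|]. now apply compact_of_closed.
Qed.
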